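(* Let $\mathcal C=\mathrm{code}(\mathcal H,X)\subseteq2^{[n]}$ be a stable hyperplane code. Then $\mathcal C$ has no chamber obstructions: there is no maximal face $\sigma$ of $\mathrm{cham}(\mathcal C)$ for which there exist two distinct faces $T_1\neq T_2$ of $\Gamma(\mathcal C)$ with $\operatorname{link}_{T_1}\Gamma(\mathcal C)=\operatorname{link}_{T_2}\Gamma(\mathcal C)=\Gamma(2^\sigma)$.
   Context: A code is a subset $\mathcal C\subseteq 2^{[n]}$. An oriented affine hyperplane in $\mathbb R^d$ is $H=\{x:w\cdot x-h=0\}$, $w\ne0$, with $H^+=\{w\cdot x-h>0\}$, $H^-=\{w\cdot x-h<0\}$. For $\mathcal H=\{H_1,\dots,H_n\}$ and open convex $X\subseteq\mathbb R^d$, the atom of $\sigma\subseteq[n]$ is $A_\sigma=\bigl(\bigcap_{i\in\sigma}(H_i^+\cap X)\bigr)\setminus\bigcup_{j\notin\sigma}H_j^+$ ($A_\emptyset=X\setminus\bigcup_iH_i^+$), and $\mathrm{code}(\mathcal H,X)=\{\sigma:A_\sigma\ne\emptyset\}$. $(\mathcal H,X)$ is stable if $X$ is open convex and whenever $X\cap\bigcap_{i\in\sigma}H_i\ne\emptyset$, $\dim\bigcap_{i\in\sigma}H_i=d-|\sigma|$; a stable hyperplane code is the code of a stable pair. Polar complex: vertex set $[n]\sqcup\{\bar1,\dots,\bar n\}$; $\Sigma(\sigma)=\sigma\sqcup\{\bar i:i\notin\sigma\}$; $\Gamma(\mathcal C)$ is the complex of all subsets of $\Sigma(\sigma)$, $\sigma\in\mathcal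 C$. For a face $T$, its support $\underline T$ is the set of $i\in[n]$ such that $i\in T$ or $\bar i\in T$. For $S\subseteq[n]$, $\Gamma(2^S)$ is the complex on $S\sqcup\{\bar i:i\in S\}$ whose faces are all subsets containing no pair $\{i,\bar i\}$ ($\Gamma(2^\emptyset)=\{\emptyset\}$). $\operatorname{link}_T\Delta=\{\nu\in\Delta:\nu\cap T=\emptyset,\nu\cup T\in\Delta\}$. The combinatorial chamber complex $\mathrm{cham}(\mathcal C)$ is the set of $\sigma\subseteq[n]$ for which there exists $T\in\Gamma(\mathcal C)$ with $\underline T=[n]\setminus\sigma$ and $\operatorname{link}_T\Gamma(\mathcal C)=\Gamma(2^\sigma)$; it is a simplicial complex. *)

From HB Require Import structures.
From mathcomp Require Import all_boot all_order all_algebra.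
From mathcomp Require Import all_classical all_reals all_analysis.
Set Implicit Arguments. Unset Strict Implicit. Unset Printing Implicit Defensive.
Import Order.TTheory GRing.Theory Num.Theory.
Import numFieldNormedType.Exports.
Local Open Scope ring_scope.
Local Open Scope classical_set_scope.

Section Geometry.
Variables (R : realType) (d n : nat).
Variables (w : 'I_n -> 'rV[R]_d) (h : 'I_n -> R) (X : set 'rV[R]_d).

Definition hval (i : 'I_n) (x : 'rV[R]_d) : R := \sum_(k < d) w i 0 k * x 0 k - h i.

Definition hpos (i : 'I_n) : set 'rV[R]_d := [set x | 0 < hval i x].
Definition hzero (i : 'I_n) : set 'rV[R]_d := [set x | hval i x = 0].

Definition atom (s : {set 'I_n}) : set 'rV[R]_d :=
  [set x | X x /\ (forall i, i \in s -> hpos i x) /\ (forall j, j \notin s -> ~ hpos j x)].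

Definition hyp_code : {set {set 'I_n}} :=
  [set s | `[< exists x, atom s x >]].

Definition normals_mx (s : {set 'I_n}) : 'M[R]_(d, n) :=
  \matrix_(k < d, i < n) (if i \in s then w i 0 k else 0).

(* dimension of the affine subspace  \bigcap_{i in s} H_i  (when nonempty):
   the dimension of its direction space {u | u . w_i = 0 for all i in s} *)
Definition inter_dim (s : {set 'I_n}) : nat := \rank (kermx (normals_mx s)).

Definition convex_set (A : set 'rV[R]_d) : Prop :=
  forall x y t, A x -> A y -> 0 <= t <= 1 -> A ((1 - t) *: x + t *: y).

Definition stable : Prop :=
  open X /\ convex_set X /\
  forall s : {set 'I_n},
    (exists x, X x /\ forall i, i \in s -> hzero i x) ->
    (inter_dim s + #|s| = d)%N.

End Geometry.

Section Combinatorics.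
Variable n : nat.

(* vertices: inl i = i, inr i = \bar i *)
Definition vert := ('I_n + 'I_n)%type.

Definition Sigma (s : {set 'I_n}) : {set vert} :=
  [set inl i | i in s] :|: [set inr i | i in ~: s].

Definition polar (C : {set {set 'I_n}}) : {set {set vert}} :=
  [set T : {set vert} | [exists s in C, T \subset Sigma s]].

Definition supp (T : {set vert}) : {set 'I_n} :=
  [set i | (inl i \in T) || (inr i \in T)].

Definition polar_full (S : {set 'I_n}) : {set {set vert}} :=
  [set T : {set vert} | (T \subset [set inl i | i in S] :|: [set inr i | i in S])
           && [forall i, ~~ ((inl i \in T) && (inr i \in T))]].

Definition link (T : {set vert}) (D : {set {set vert}}) : {set {set vert}} :=
  [set nu in D | [disjoint nu & T] && (nu :|: T \in D)].

Definition cham (C : {set {set 'I_n}}) : {set {set 'I_n}} :=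
  [set s : {set 'I_n} | [exists T in polar C,
             (supp T == ~: s) && (link T (polar C) == polar_full s)]].

Definition maximal_face (K : {set {set 'I_n}}) (s : {set 'I_n}) : Prop :=
  s \in K /\ forall t, t \in K -> s \subset t -> t = s.

Definition chamber_obstruction (C : {set {set 'I_n}}) : Prop :=
  exists s, maximal_face (cham C) s /\
    exists T1 T2, [/\ T1 \in polar C, T2 \in polar C, T1 <> T2,
                     link T1 (polar C) = polar_full s &
                     link T2 (polar C) = polar_full s].

End Combinatorics.

From Pilot Require Import Defs.
From HB Require Import structures.
From mathcomp Require Import all_boot all_order all_algebra.
From mathcomp Require Import all_classical all_reals all_analysis.
From mathcomp Require Import ring lra zify.
Import Order.TTheory GRing.Theory Num.Theory.
Import numFieldNormedType.Exports.
Local Open Scope ring_scope.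
Set Implicit Arguments. Unset Strict Implicit. Unset Printing Implicit Defensive.

(* Suppose sigma is a maximal face of cham(C) and the faces T1 <> T2 both have link
   Gamma(2^sigma).  Such a face avoids the vertices over sigma, and every sign pattern
   on sigma is realized by a codeword whose polar face contains it; as T1 and T2 must
   choose opposite vertices over some j outside sigma, every sign pattern on sigma + j
   is realized by a point of X.  Convexity of X then gives a point q of X on all the
   hyperplanes H_i, i in sigma + j (cross one hyperplane at a time along a segment).
   By stability the normals of the hyperplanes through q are independent, so all sign
   patterns on them occur near q, which makes the zero set of q a face of cham(C).  It
   strictly contains sigma, contradicting maximality. *)

Local Notation subsetP := fintype.subsetP.

Section PolarComplex.
Variable n : nat.
Implicit Types (C : {set {set 'I_n}}) (S Z P c tau : {set 'I_n}) (T nu : {set vert n}).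

Definition vert_idx (v : vert n) : 'I_n := match v with inl i | inr i => i end.

Lemma mem_inl_inr_imset (A B : {set 'I_n}) v :
  (v \in [set inl i | i in A] :|: [set inr i | i in B])
  = match v with inl i => i \in A | inr i => i \in B end.
Proof.
rewrite inE; case: v => i.
  have /negbTE-> : inl i \notin [set inr j | j in B] by apply/imsetP => -[].
  by rewrite orbF mem_imset //; exact: inl_inj.
have /negbTE-> : inr i \notin [set inl j | j in A] by apply/imsetP => -[].
by rewrite mem_imset //; exact: inr_inj.
Qed.

Lemma mem_Sigma c v :
  (v \in Sigma c) = match v with inl i => i \in c | inr i => i \notin c end.
Proof. by rewrite mem_inl_inr_imset; case: v => i; rewrite ?inE. Qed.

Lemma Sigma_inl_inr c i : inl i \in Sigma c -> inr i \notin Sigma c.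
Proof. by rewrite !mem_Sigma => ->. Qed.

Lemma polarP C T :
  reflect (exists2 c, c \in C & T \subset Sigma c) (T \in polar C).
Proof. by rewrite inE; apply: exists_inP. Qed.

Lemma linkP T (D : {set {set vert n}}) nu :
  reflect [/\ nu \in D, [disjoint nu & T] & nu :|: T \in D] (nu \in link T D).
Proof. by rewrite inE; apply: and3P. Qed.

Lemma polar_fullP S nu :
  reflect ({in nu, forall v, vert_idx v \in S} /\ forall i, inl i \in nu -> inr i \notin nu)
          (nu \in polar_full S).
Proof.
have mem_full v : (v \in [set inl i | i in S] :|: [set inr i | i in S]) = (vert_idx v \in S).
  by rewrite mem_inl_inr_imset; case: v.
rewrite inE; apply: (iffP andP) => [[/subsetP nuS /forallP nu_opp] | [nuS nu_opp]].
  split=> [v /nuS|i inl_i]; first by rewrite mem_full.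
  by move: (nu_opp i); rewrite inl_i.
split; first by apply/subsetP => v /nuS; rewrite mem_full.
by apply/forallP => i; apply/nandP; case: (boolP (inl i \in nu)) => [/nu_opp|]; [right | left].
Qed.

Lemma mem_supp T v : v \in T -> vert_idx v \in supp T.
Proof. by case: v => i vT; rewrite inE vT ?orbT. Qed.

Lemma link_sub_polar_full C T : link T (polar C) \subset polar_full (~: supp T).
Proof.
apply/subsetP => nu /linkP [_ disj /polarP [c _ /subsetP nuT_c]].
have nu_c v : v \in nu -> v \in Sigma c by move=> v_nu; apply: nuT_c; rewrite inE v_nu.
have T_c v : v \in T -> v \in Sigma c by move=> vT; apply: nuT_c; rewrite inE vT orbT.
apply/polar_fullP; split=> [v v_nu | i /nu_c/Sigma_inl_inr]; last by apply: contra; apply: nu_c.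
case: v v_nu => i v_nu; have i_c := nu_c _ v_nu; rewrite !inE (disjointFr disj v_nu) /=.
  exact: contra (T_c _) (Sigma_inl_inr i_c).
by rewrite orbF; apply/negP => /T_c/Sigma_inl_inr; rewrite i_c.
Qed.

Lemma mem_cham_patterns C Z P :
  [disjoint Z & P] -> (forall tau, tau :&: Z :|: P \in C) -> Z \in cham C.
Proof.
move=> ZP patterns.
pose T := [set v in Sigma P | vert_idx v \notin Z].
have memT v : (v \in T) = (v \in Sigma P) && (vert_idx v \notin Z) by exact: finset.in_set.
have suppT : supp T = ~: Z.
  apply/setP => i; rewrite [i \in supp T]finset.in_set !memT !mem_Sigma !inE /=.
  by case: (i \in Z); case: (i \in P).
have TC : T \in polar C.
  apply/polarP; exists P; last by apply/subsetP => v; rewrite inE => /andP [].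
  by have := patterns finset.set0; rewrite finset.set0I finset.set0U.
rewrite inE; apply/existsP; exists T; rewrite TC suppT eqxx /= finset.eqEsubset.
rewrite -{1}(finset.setCK Z) -suppT link_sub_polar_full /=.
apply/subsetP => nu /polar_fullP [nuZ nu_opp].
pose c := [set i | inl i \in nu] :&: Z :|: P.
have nuT_c : nu :|: T \subset Sigma c.
  apply/subsetP => v; rewrite inE => /orP [v_nu | /setIdP [vP vZ]].
    have := nuZ v v_nu; case: v v_nu => i v_nu iZ; rewrite mem_Sigma !inE iZ andbT.
      by rewrite v_nu.
    by rewrite (negbTE (contraL (nu_opp i) v_nu)) (disjointFr ZP iZ).
  by move: vP vZ; rewrite !mem_Sigma; case: v => i /=;
    rewrite !inE => + /negbTE->; rewrite andbF.
have cC : c \in C by apply: patterns.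
apply/linkP; split; last by apply/polarP; exists c.
  by apply/polarP; exists c => //; exact: fintype.subset_trans (finset.subsetUl _ _) nuT_c.
by apply/pred0P => v /=; rewrite memT; case: (boolP (v \in nu)) => // /nuZ ->; rewrite andbF.
Qed.

Lemma set1_polar_full S v : vert_idx v \in S -> [set v] \in polar_full S.
Proof.
move=> vS; apply/polar_fullP; split=> [u /set1P -> // | i /set1P <-].
by apply/set1P.
Qed.

Section FullLink.
Variables (C : {set {set 'I_n}}) (S : {set 'I_n}) (T : {set vert n}).
Hypotheses (TC : T \in polar C) (T_link : link T (polar C) = polar_full S).

Lemma full_link_supp : supp T = ~: S.
Proof.
have notinT v : vert_idx v \in S -> v \notin T.
  move=> /(set1_polar_full (v := v)); rewrite -T_link => /linkP [_ disj _].
  by rewrite (disjointFr disj (set11 v)).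
apply/setP => i; rewrite [in RHS]inE inE.
case: (boolP (i \in S)) => iS /=; first by apply/negbTE/norP; split; apply: notinT.
case/polarP: TC => c cC Tc.
have [v [vi vc]] : exists v, vert_idx v = i /\ v \in Sigma c.
  by case: (boolP (i \in c)) => ic; [exists (inl i) | exists (inr i)]; rewrite mem_Sigma.
apply: contraR iS => /norP [lT rT].
have vT : v \notin T by case: v vi vc => j /= ji; rewrite ji.
have : [set v] \in link T (polar C).
  apply/linkP; split; first by apply/polarP; exists c => //; rewrite finset.sub1set.
    by rewrite disjoints1.
  by apply/polarP; exists c => //; rewrite finset.subUset finset.sub1set vc.
by rewrite T_link; case/polar_fullP => /(_ v (set11 v)); rewrite vi.
Qed.

Lemma full_link_pattern tau :
  exists2 c, c \in C & T \subset Sigma c /\ c :&: S = tau :&: S.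
Proof.
pose nu := [set v in Sigma tau | vert_idx v \in S].
have memnu v : (v \in nu) = (v \in Sigma tau) && (vert_idx v \in S) by exact: finset.in_set.
have : nu \in link T (polar C).
  rewrite T_link; apply/polar_fullP; split=> [v | i]; rewrite !memnu => /andP [] //.
  by move=> /Sigma_inl_inr /negbTE ->.
case/linkP => _ _ /polarP [c cC /subsetP nuT_c]; exists c => //; split.
  by apply/subsetP => v vT; apply: nuT_c; rewrite inE vT orbT.
apply/setP => i; rewrite !inE; case: (boolP (i \in S)) => iS; rewrite ?andbF ?andbT //.
have [v [vi v_tau]] : exists v, vert_idx v = i /\ v \in Sigma tau.
  by case: (boolP (i \in tau)) => it; [exists (inl i) | exists (inr i)]; rewrite mem_Sigma.
have : v \in Sigma c by apply: nuT_c; rewrite finset.in_setU memnu v_tau vi iS.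
move: v_tau; rewrite !mem_Sigma; case: v vi => j /= <-; first by move=> -> ->.
by move=> /negbTE -> /negbTE ->.
Qed.

End FullLink.

Lemma full_links_opposite_patterns C S Ta Tb j :
    link Ta (polar C) = polar_full S -> link Tb (polar C) = polar_full S ->
    inl j \in Ta -> inr j \in Tb ->
  forall tau, exists2 c, c \in C & c :&: (j |: S) = tau :&: (j |: S).
Proof.
move=> Ta_link Tb_link jTa jTb tau.
have [T T_link jT] : exists2 T, link T (polar C) = polar_full S
                               & (if j \in tau then inl j else inr j) \in T.
  by case: ifP => _; [exists Ta | exists Tb].
have [c cC [/subsetP Tc cS]] := full_link_pattern T_link tau.
exists c => //; apply/setP => i; move/setP/(_ i): cS; rewrite !inE.
case: eqP => [-> _ | _ //]; move/Tc: jT; rewrite mem_Sigma.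
by case: (j \in tau) => [-> | /negbTE ->].
Qed.

Lemma full_links_neq_patterns C S T1 T2 :
    T1 \in polar C -> link T1 (polar C) = polar_full S ->
    T2 \in polar C -> link T2 (polar C) = polar_full S -> T1 != T2 ->
  exists2 j, j \notin S &
    forall tau, exists2 c, c \in C & c :&: (j |: S) = tau :&: (j |: S).
Proof.
move=> T1C T1_link T2C T2_link T12.
wlog [v vT1 vT2] : T1 T2 T1C T1_link T2C T2_link T12 / exists2 v, v \in T1 & v \notin T2.
  move=> gen; have [v T12v] : exists v, (v \in T1) != (v \in T2).
    apply/existsP; apply: contraNT T12 => /existsPn same.
    by apply/eqP/setP => v; apply/eqP/negPn.
  move: T12v; case: (boolP (v \in T1)) => vT1 /= vT2.
    by apply: (gen T1 T2 T1C T1_link T2C T2_link T12); exists v; case: (v \in T2) vT2.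
  apply: (gen T2 T1 T2C T2_link T1C T1_link); first by rewrite eq_sym.
  by exists v; case: (v \in T2) vT2.
have jS : vert_idx v \notin S by rewrite -finset.in_setC -(full_link_supp T1C T1_link) mem_supp.
exists (vert_idx v) => //; move: jS.
rewrite -finset.in_setC -(full_link_supp T2C T2_link) inE.
case: v vT1 vT2 => j vT1 /negbTE -> /=; rewrite ?orbF => vT2.
  exact: full_links_opposite_patterns T1_link T2_link vT1 vT2.
exact: full_links_opposite_patterns T2_link T1_link vT2 vT1.
Qed.
End PolarComplex.

Lemma convex_comb_gt0 (R : realDomainType) (a b t : R) :
  0 <= t <= 1 -> 0 < a -> 0 < b -> 0 < (1 - t) * a + t * b.
Proof. by case/andP => t_ge0 t_le1 a_gt0 b_gt0; nra. Qed.

Lemma convex_comb_le0 (R : realDomainType) (a b t : R) :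
  0 <= t <= 1 -> a <= 0 -> b <= 0 -> (1 - t) * a + t * b <= 0.
Proof. by case/andP => t_ge0 t_le1 a_le0 b_le0; nra. Qed.

Lemma convex_comb_root (R : realFieldType) (a b : R) :
  0 < a -> b <= 0 -> exists2 t, 0 <= t <= 1 & (1 - t) * a + t * b = 0.
Proof.
move=> a_gt0 b_le0; have ab_gt0 : 0 < a - b by lra.
exists (a / (a - b)); last by field; lra.
by rewrite divr_ge0 ?ler_pdivrMr ?mul1r; lra.
Qed.

Section ConvexSignPatterns.
Variables (R : realType) (d : nat) (I : finType) (f : I -> 'rV[R]_d -> R).
Hypothesis f_convex :
  forall i x y t, f i ((1 - t) *: x + t *: y) = (1 - t) * f i x + t * f i y.

Lemma convex_sign_patterns_root (K : set 'rV[R]_d) (S : seq I) :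
  Defs.convex_set K ->
  (forall tau : {set I}, exists2 x, K x & forall i, i \in S -> (0 < f i x) = (i \in tau)) ->
  exists2 x, K x & forall i, i \in S -> f i x = 0.
Proof.
elim: S K => [|i0 S IH] K K_convex patterns.
  by have [x Kx _] := patterns finset.set0; exists x.
have [i0S | i0S] := boolP (i0 \in S).
  have [|x Kx x0] := IH K K_convex.
    move=> tau; have [x Kx xtau] := patterns tau.
    by exists x => // i iS; apply: xtau; rewrite inE iS orbT.
  by exists x => // i; rewrite inE => /orP [/eqP -> |]; apply: x0.
pose K0 x := K x /\ f i0 x = 0.
have K0_convex : Defs.convex_set K0.
  move=> x y t [Kx x0] [Ky y0] t01; split; first exact: K_convex.
  by rewrite f_convex x0 y0 !mulr0 addr0.
have [|x [Kx x0] xS0] := IH K0 K0_convex.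
  (* Points realizing i0 |: tau and tau :\ i0 lie on either side of the zero set of
     f i0; the segment between them crosses it without changing the other signs. *)
  move=> tau.
  have [x1 Kx1 x1tau] := patterns (i0 |: tau).
  have [x2 Kx2 x2tau] := patterns (tau :\ i0).
  have x1_gt0 : 0 < f i0 x1 by rewrite x1tau ?mem_head // setU11.
  have x2_le0 : f i0 x2 <= 0 by rewrite leNgt x2tau ?mem_head // setD11.
  have [t t01 t_root] := convex_comb_root x1_gt0 x2_le0.
  exists ((1 - t) *: x1 + t *: x2); first by split; [exact: K_convex | rewrite f_convex].
  move=> i iS; have iS' : i \in i0 :: S by rewrite inE iS orbT.
  have i_neq_i0 : i != i0 by apply: contraNneq i0S => <-.
  rewrite f_convex; have [itau | itau] := boolP (i \in tau).
    by apply: convex_comb_gt0; rewrite // ?x1tau ?x2tau // !inE ?itau ?i_neq_i0 ?orbT.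
  apply/negbTE; rewrite -leNgt; apply: convex_comb_le0;
    by rewrite // leNgt ?x1tau ?x2tau // !inE (negbTE i_neq_i0) (negbTE itau) ?andbF.
by exists x => // i; rewrite inE => /orP [/eqP -> | /xS0].
Qed.

End ConvexSignPatterns.

Section SupportedRows.
Variables (F : fieldType) (n : nat) (s : {set 'I_n}).

Lemma supported_mx_factor k (M : 'M[F]_(k, n)) :
  (forall a j, j \notin s -> M a j = 0) ->
  M = colsub (@enum_val _ (mem s)) M *m rowsub enum_val 1%:M.
Proof.
move=> M_supp; apply/matrixP => a j; rewrite !mxE.
under eq_bigr => m _ do rewrite !mxE.
have [js | js] := boolP (j \in s); last first.
  rewrite M_supp // big1 // => m _; rewrite (_ : enum_val m == j = false) ?mulr0 //.
  by apply: contraNF js => /eqP <-; exact: enum_valP.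
rewrite (bigD1 (enum_rank_in js j)) //= enum_rankK_in // eqxx mulr1 big1 ?addr0 //.
move=> m m_neq; rewrite (_ : enum_val m == j = false) ?mulr0 //.
by apply: contraNF m_neq => /eqP ej; apply/eqP/enum_val_inj; rewrite enum_rankK_in.
Qed.

Lemma supported_row_submx d (A : 'M[F]_(d, n)) (e : 'rV[F]_n) :
  (forall k j, j \notin s -> A k j = 0) -> \rank A = #|s| ->
  (forall j, j \notin s -> e 0 j = 0) -> (e <= A)%MS.
Proof.
move=> A_supp rankA e_supp.
set D : 'M[F]_(#|s|, n) := rowsub enum_val 1%:M.
have AD : (A <= D)%MS by rewrite [A](supported_mx_factor A_supp) submxMl.
have DA : (D <= A)%MS.
  by rewrite -(mxrank_leqif_sup AD).2 eqn_leq mxrankS //= rankA rank_leq_row.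
rewrite (submx_trans _ DA) // [e](supported_mx_factor (M := e)) ?submxMl // => a j.
by rewrite (ord1 a); apply: e_supp.
Qed.

End SupportedRows.

Section Hyperplanes.
Variables (R : realType) (d n : nat).
Variables (w : 'I_n -> 'rV[R]_d) (h : 'I_n -> R) (X : set 'rV[R]_d).
Local Notation f := (hval w h).
Local Notation C := (hyp_code w h X).
Implicit Types (s : {set 'I_n}) (p u : 'rV[R]_d).

Definition hdot (i : 'I_n) (u : 'rV[R]_d) : R := \sum_(k < d) w i 0 k * u 0 k.

Lemma hval_line i p u t : f i (p + t *: u) = f i p + t * hdot i u.
Proof.
rewrite /hval /hdot mulr_sumr addrAC -big_split /=; congr (_ - _).
by apply: eq_bigr => k _; rewrite !mxE; ring.
Qed.

Lemma hval_convex i x y t : f i ((1 - t) *: x + t *: y) = (1 - t) * f i x + t * f i y.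
Proof.
rewrite /hval; have -> : \sum_(k < d) w i 0 k * ((1 - t) *: x + t *: y) 0 k
                  = (1 - t) * hdot i x + t * hdot i y.
  by rewrite /hdot !mulr_sumr -big_split; apply: eq_bigr => k _; rewrite !mxE /=; ring.
by rewrite /hdot; ring.
Qed.

Lemma hyp_codeP c : c \in C <-> exists2 x, X x & c = [set i | 0 < f i x].
Proof.
rewrite inE; split => [/asboolP [x [Xx [c_pos c_npos]]] | [x Xx ->]].
  exists x => //; apply/setP => i; rewrite inE.
  by apply/idP/idP => [/c_pos // | ]; apply: contraTT => /c_npos /negP.
by apply/asboolP; exists x; split=> //; split=> i; rewrite inE // => /negP.
Qed.

Lemma normals_mxE s u i : i \in s -> (u *m normals_mx w s) 0 i = hdot i u.
Proof. by move=> i_s; rewrite mxE; apply: eq_bigr => k _; rewrite mxE i_s mulrC. Qed.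

Lemma stable_rank s p : stable w h X -> X p -> (forall i, i \in s -> f i p = 0) ->
  \rank (normals_mx w s) = #|s|.
Proof.
case=> _ [_ dim_inter] Xp p_s; have := dim_inter s (ex_intro _ p (conj Xp p_s)).
by rewrite /inter_dim mxrank_ker; have := rank_leq_row (normals_mx w s); lia.
Qed.

Lemma line_perturbation p u : open X -> X p ->
  exists2 t, 0 < t & X (p + t *: u) /\
    forall i, f i p != 0 -> (0 < f i (p + t *: u)) = (0 < f i p).
Proof.
move=> X_open Xp.
have line_cvg : ((fun t : R => p + t *: u) @ 0 --> p)%classic.
  have : ((fun t : R => p + t *: u) @ 0 --> p + 0 *: u)%classic.
    by apply: cvgD; [exact: cvg_cst | apply: cvgZ; [exact: cvg_id | exact: cvg_cst]].
  by rewrite scale0r addr0.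
have X_near : \forall t \near 0, X (p + t *: u).
  by apply: line_cvg; apply: open_nbhs_nbhs.
have sign_near : \forall t \near 0,
    forall i, f i p != 0 -> (0 < f i (p + t *: u)) = (0 < f i p).
  apply: (@filter_forall _ _ _ (nbhs (0 : R))) => i /=.
  have fi_cvg : ((fun t : R => f i (p + t *: u)) @ 0 --> f i p)%classic.
    under eq_fun do rewrite hval_line.
    have : ((fun t : R => f i p + t * hdot i u) @ 0 --> f i p + 0 * hdot i u)%classic.
      by apply: cvgD; [exact: cvg_cst | apply: cvgM; [exact: cvg_id | exact: cvg_cst]].
    by rewrite mul0r addr0.
  have [fi_lt0 | fi_gt0 | _] := ltgtP (f i p) 0; last by apply: filterE.
    near=> t => _; apply/negbTE; rewrite -leNgt ltW //; near: t.
    exact: cvgr_lt fi_cvg _ fi_lt0.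
  near=> t => _; apply/idP; near: t.
  exact: cvgr_gt fi_cvg _ fi_gt0.
near (at_right (0 : R)) => t; exists t; first by near: t; exact: nbhs_right_gt.
by split; near: t; apply: cvg_within; [exact: X_near | exact: sign_near].
Unshelve. all: by end_near.
Qed.

Lemma stable_local_patterns p : stable w h X -> X p ->
  forall tau, tau :&: [set i | f i p == 0] :|: [set i | 0 < f i p] \in C.
Proof.
move=> stab Xp tau; set Z := [set i | f i p == 0].
(* The normals of the hyperplanes through p are independent, so some direction u has
   the prescribed signs against them. *)
pose e : 'rV[R]_n := \row_j (if j \in Z then (if j \in tau then 1 else -1) else 0).
have [u eu] : exists u, e = u *m normals_mx w Z.
  apply/submxP; apply: (supported_row_submx (s := Z)).
  - by move=> k j jZ; rewrite mxE (negbTE jZ).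
  - by apply: stable_rank stab Xp _ => i; rewrite inE => /eqP.
  - by move=> j jZ; rewrite mxE (negbTE jZ).
have [t t_gt0 [Xpt pt_sign]] := line_perturbation u stab.1 Xp.
apply/hyp_codeP; exists (p + t *: u) => //; apply/setP => i; rewrite !inE.
have [fi0 | fi_neq0] := eqVneq (f i p) 0; last by rewrite andbF pt_sign.
have iZ : i \in Z by rewrite inE fi0.
rewrite fi0 ltxx orbF andbT hval_line fi0 add0r -(normals_mxE u iZ) -eu mxE iZ.
by case: (i \in tau); rewrite ?mulr1 ?mulrN1 ?oppr_gt0 ?t_gt0 // ltNge ltW.
Qed.

Lemma stable_zeros_cham p : stable w h X -> X p -> [set i | f i p == 0] \in cham C.
Proof.
move=> stab Xp; apply: mem_cham_patterns (stable_local_patterns stab Xp).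
by apply/pred0P => i /=; rewrite !inE; case: eqP => // ->; rewrite ltxx.
Qed.

End Hyperplanes.

Theorem theoremC (R : realType) (d n : nat)
    (w : 'I_n -> 'rV[R]_d) (h : 'I_n -> R) (X : set 'rV[R]_d) :
  (forall i, w i != 0) ->
  stable w h X ->
  ~ chamber_obstruction (hyp_code w h X).
Proof.
move=> _ stab [s [[_ s_max] [T1 [T2 [T1C T2C T12 T1_link T2_link]]]]].
have [j js patterns] := full_links_neq_patterns T1C T1_link T2C T2_link (introN eqP T12).
have [q Xq q0] : exists2 q, X q & forall i, i \in enum (j |: s) -> hval w h i q = 0.
  apply: (convex_sign_patterns_root (hval_convex w h)) stab.2.1 _ => tau.
  have [c /hyp_codeP [x Xx ->] c_tau] := patterns tau.
  exists x => // i; rewrite mem_enum => i_js.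
  by move/setP/(_ i): c_tau; rewrite !inE in i_js *; rewrite i_js !andbT.
have s_q : s \subset [set i | hval w h i q == 0].
  by apply/subsetP => i i_s; rewrite inE q0 // mem_enum setU1r.
have := s_max _ (stable_zeros_cham stab Xq) s_q.
by move/setP/(_ j); rewrite inE q0 ?mem_enum ?setU11 // eqxx (negbTE js).
Qed.
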